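(* Let $(X,b,m)$ be a connected weighted graph satisfying conditions (B) and (M), let $D\subset X$ and $\Omega:=X\setminus D$. Then $\mathrm{Covr}(D)=\mathrm{Inr}(\Omega)$.
   Context: A weighted graph $(X,b,m)$: $X$ countable, $b:X\times X\to[0,\infty)$ symmetric with $b(x,x)=0$ and $\sum_y b(x,y)<\infty$, $m:X\to(0,\infty)$. Condition (B): $\sup_x\frac{1}{m(x)}\sum_y b(x,y)<\infty$. Condition (M): $\sup_x m(x)<\infty$. A path is $\gamma=(x_0,\dots,x_k)$ with $b(x_j,x_{j+1})>0$, of length $L(\gamma)=\sum_{j=0}^{k-1}1/b(x_j,x_{j+1})$ (trivial paths have length $0$); connected means any two points are joined by a path; $d(x,y)$ is the infimum of lengths of paths from $x$ to $y$. $U_r(x):=\{y:d(x,y)<r\}$, $B_r(x):=\{y:d(x,y)\le r\}$. The inradius is $\mathrm{Inr}(\Omega):=\sup\{r>0:\exists x\in\Omega \text{ with } U_r(x)\subset\Omega\}$ and the covering radius is $\mathrm{Covr}(D):=\inf\{R>0: \bigcup_{p\in D}B_R(p)=X\}\in[0,\infty]$ with $\inf\emptyset=\infty$. *)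

From HB Require Import structures.
From mathcomp Require Import all_boot all_order all_algebra.
From mathcomp Require Import classical_sets boolp reals constructive_ereal ereal esum.

Set Implicit Arguments.
Unset Strict Implicit.
Unset Printing Implicit Defensive.

Import Order.TTheory GRing.Theory Num.Theory.
Local Open Scope classical_set_scope.
Local Open Scope ring_scope.

Section WeightedGraph.
Context {R : realType} {X : countType}.

Definition weighted_graph (b : X -> X -> R) (m : X -> R) : Prop :=
  (forall x y, 0 <= b x y) /\
  (forall x y, b x y = b y x) /\
  (forall x, b x x = 0) /\
  (forall x, (\esum_(y in [set: X]) (b x y)%:E < +oo)%E) /\
  (forall x, 0 < m x).

Definition condB (b : X -> X -> R) (m : X -> R) : Prop :=
  exists C : R, forall x,
    ((m x)^-1%:E * (\esum_(y in [set: X]) (b x y)%:E) <= C%:E)%E.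

Definition condM (m : X -> R) : Prop :=
  exists C : R, forall x, m x <= C.

(** A path (x_0,...,x_k) is encoded as x_0 :: s; consecutive points have b > 0. *)
Definition is_path (b : X -> X -> R) (x : X) (s : seq X) : bool :=
  path (fun u v => 0 < b u v) x s.

Definition path_length (b : X -> X -> R) (x : X) (s : seq X) : R :=
  \sum_(e <- zip (x :: s) s) (b e.1 e.2)^-1.

Definition connected_graph (b : X -> X -> R) : Prop :=
  forall x y, exists s, is_path b x s /\ last x s = y.

Definition gdist (b : X -> X -> R) (x y : X) : \bar R :=
  ereal_inf [set (path_length b x s)%:E | s in
               [set s | is_path b x s /\ last x s = y]].

Definition open_ball (b : X -> X -> R) (x : X) (r : R) : set X :=
  [set y | (gdist b x y < r%:E)%E].

Definition closed_ball (b : X -> X -> R) (x : X) (r : R) : set X :=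
  [set y | (gdist b x y <= r%:E)%E].

(** Inradius: sup{ r > 0 : exists x in Omega, U_r(x) ⊆ Omega }, with sup ∅ := 0. *)
Definition inradius (b : X -> X -> R) (Omega : set X) : \bar R :=
  ereal_sup ([set 0%E] `|` [set r%:E | r in
     [set r : R | 0 < r /\ exists2 x, Omega x & open_ball b x r `<=` Omega]]).

(** Covering radius: inf{ R > 0 : union_{p in D} B_R(p) = X }, with inf ∅ = +oo. *)
Definition covradius (b : X -> X -> R) (D : set X) : \bar R :=
  ereal_inf [set r%:E | r in
     [set r : R | 0 < r /\ \bigcup_(p in D) closed_ball b p r = [set: X]]].

End WeightedGraph.

From HB Require Import structures.
From mathcomp Require Import all_boot all_order all_algebra.
From mathcomp Require Import classical_sets boolp reals constructive_ereal ereal esum.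
From mathcomp Require Import lra.
Import Order.TTheory GRing.Theory Num.Theory.
Local Open Scope classical_set_scope.
Local Open Scope ring_scope.

(* Only the symmetry of the path distance and d(x, x) <= 0 matter.  A point x outside
   every ball B_r(p), p in D, has U_r(x) inside X \ D, so r <= Inr; conversely
   if U_r(x) lies in X \ D, then no ball B_r'(p), p in D, with r' < r reaches x,
   so r <= Covr. *)

Section PathDistance.
Variables (R : realType) (X : countType) (b : X -> X -> R).
Hypothesis b_sym : forall x y, b x y = b y x.

Lemma path_length_cons x y s :
  path_length b x (y :: s) = (b x y)^-1 + path_length b y s.
Proof. by rewrite /path_length /= big_cons. Qed.

Lemma path_length_rcons x s y :
  path_length b x (rcons s y) = path_length b x s + (b (last x s) y)^-1.
Proof.
elim: s x => [|z s IHs] x /=.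
  by rewrite /path_length /= big_seq1 big_nil add0r.
by rewrite !path_length_cons IHs addrA.
Qed.

Lemma last_rev_belast (x : X) (s : seq X) : last (last x s) (rev (belast x s)) = x.
Proof. by case: s => [|y s] //=; rewrite rev_cons last_rcons. Qed.

Lemma path_length_rev x s :
  path_length b x s = path_length b (last x s) (rev (belast x s)).
Proof.
elim: s x => [|y s IHs] x //=.
by rewrite rev_cons path_length_rcons path_length_cons IHs last_rev_belast b_sym addrC.
Qed.

Lemma is_path_rev x s : is_path b x s -> is_path b (last x s) (rev (belast x s)).
Proof. by rewrite /is_path rev_path; apply: sub_path => u v /=; rewrite b_sym. Qed.

Lemma gdist_sym x y : gdist b x y = gdist b y x.
Proof.
have sub u v :
    [set (path_length b u s)%:E | s in [set s | is_path b u s /\ last u s = v]] `<=`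
    [set (path_length b v s)%:E | s in [set s | is_path b v s /\ last v s = u]].
  move=> _ [s [us <-] <-]; exists (rev (belast u s)); last by rewrite -path_length_rev.
  by split; [apply: is_path_rev | rewrite last_rev_belast].
by rewrite /gdist; congr ereal_inf; apply/seteqP; split; apply: sub.
Qed.

End PathDistance.

Section Radii.
Variables (R : realType) (X : countType) (b : X -> X -> R) (D : set X).

Lemma gdist_xx_le0 x : (gdist b x x <= 0)%E.
Proof.
by apply: ereal_inf_lbound; exists [::] => //; rewrite /path_length big_nil.
Qed.

Lemma closed_ball_center x r : 0 <= r -> closed_ball b x r x.
Proof. by move=> r_ge0; apply: le_trans (gdist_xx_le0 x) _; rewrite lee_fin. Qed.

Lemma inradius_ge0 Omega : (0 <= inradius b Omega)%E.
Proof. by apply: ereal_sup_ubound; left. Qed.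

Hypothesis b_sym : forall x y, b x y = b y x.

Lemma uncovered_le_inradius r :
  0 < r -> \bigcup_(p in D) closed_ball b p r != [set: X] ->
  (r%:E <= inradius b (~` D))%E.
Proof.
move=> r_gt0 /setTPn[x x_far].
apply: ereal_sup_ubound; right; exists r => //; split => //; exists x.
- by move=> Dx; apply: x_far; exists x => //; apply: closed_ball_center; exact: ltW.
- move=> y dxy Dy; apply: x_far; exists y => //.
  by rewrite /closed_ball /= gdist_sym // ltW.
Qed.

Lemma covradius_le_inradius : (covradius b D <= inradius b (~` D))%E.
Proof.
apply/lee_addgt0Pr => e e_gt0.
case E: (inradius b (~` D)) (inradius_ge0 (~` D)) => [i| |] //;
  last by move=> _; rewrite /= leey.
rewrite lee_fin => i_ge0; apply: ereal_inf_lbound; exists (i + e) => //.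
have ie_gt0 : 0 < i + e by lra.
split=> //; apply/eqP; apply: contraT => not_cover.
have := uncovered_le_inradius _ ie_gt0 not_cover.
by rewrite E lee_fin gerDl leNgt e_gt0.
Qed.

Lemma inradius_le_covradius : (inradius b (~` D) <= covradius b D)%E.
Proof.
apply: ge_ereal_sup => _ [->|[r [r_gt0 [x _ ball_in]] <-]];
  apply: le_ereal_inf_tmp => _ [r' [r'_gt0 cover] <-]; rewrite lee_fin.
  exact: ltW.
rewrite leNgt; apply/negP => r'_lt_r.
have [p Dp dpx] : (\bigcup_(p in D) closed_ball b p r') x by rewrite cover.
apply: (ball_in p) => //; rewrite /open_ball /= gdist_sym //.
by apply: le_lt_trans dpx _; rewrite lte_fin.
Qed.

End Radii.

Theorem lemma3p6 (R : realType) (X : countType) (b : X -> X -> R) (m : X -> R)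
  (D : classical_sets.set X) :
  weighted_graph b m -> connected_graph b -> condB b m -> condM m ->
  covradius b D = inradius b (classical_sets.setC D).
Proof.
move=> [_ [b_sym _]] _ _ _.
apply/eqP; rewrite eq_le.
by rewrite covradius_le_inradius // inradius_le_covradius.
Qed.
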